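(* Let $g(n) = \frac{(\log n)^2}{n} f(n)$, let \[ L = \liminf_{k\to\infty} \frac{\log(R(k,k))}{k} \quad\text{and}\quad M = \limsup_{t\to\infty} \max_{1 \le s \le t} \frac{\log(R(s,t))}{\sqrt{st}}. \] Then \[ \liminf_{n\to\infty} g(n) \ge L^2 \quad\text{and}\quad \limsup_{n\to\infty} g(n) \ge M^2. \]
   Context: All logarithms are in base 2. For positive integers $s,t$, the Ramsey number $R(s,t)$ is the minimum $n$ such that every red/blue edge-coloring of the complete graph $K_n$ contains a red clique on $s$ vertices or a blue clique on $t$ vertices. For a graph $G$, $\chi(G)$ is its chromatic number and $\omega(G)$ its clique number. For $n \in \mathbb{N}$, $f(n)$ is the maximum of $\chi(G)/\omega(G)$ over all graphs $G$ on $n$ vertices. *)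

From HB Require Import structures.
From mathcomp Require Import all_boot all_order all_algebra.
From mathcomp Require Import boolp classical_sets reals ereal topology normedtype sequences exp.
Set Implicit Arguments. Unset Strict Implicit. Unset Printing Implicit Defensive.
Import Order.TTheory GRing.Theory Num.Theory.
Local Open Scope ring_scope.

Definition simple_graph n (E : {ffun 'I_n * 'I_n -> bool}) : bool :=
  [forall x, ~~ E (x, x)] && [forall x, forall y, E (x, y) == E (y, x)].

Definition colorable n (E : {ffun 'I_n * 'I_n -> bool}) (k : nat) : bool :=
  [exists c : {ffun 'I_n -> 'I_k}, [forall x, forall y, E (x, y) ==> (c x != c y)]].

(* chromatic number: least k <= n with a proper k-colouring (n colours always suffice) *)
Definition chromatic n (E : {ffun 'I_n * 'I_n -> bool}) : nat :=
  \big[minn/n]_(k < n.+1 | colorable E k) k.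

Definition is_clique n (E : {ffun 'I_n * 'I_n -> bool}) (S : {set 'I_n}) : bool :=
  [forall x in S, forall y in S, (x != y) ==> E (x, y)].

Definition clique_number n (E : {ffun 'I_n * 'I_n -> bool}) : nat :=
  \max_(S : {set 'I_n} | is_clique E S) #|S|.

Definition fchi (R : realType) (n : nat) : R :=
  \big[Num.max/0]_(E : {ffun 'I_n * 'I_n -> bool} | simple_graph E)
     ((chromatic E)%:R / (clique_number E)%:R).

(* Ramsey property: every red/blue colouring of the edges of K_n (colour of
   edge {x,y} is c (x,y) = c (y,x), true = red) has a red K_s or a blue K_t. *)
Definition ramsey_prop (s t n : nat) : bool :=
  [forall c : {ffun 'I_n * 'I_n -> bool},
    [forall x, forall y, c (x, y) == c (y, x)] ==>
    [exists S : {set 'I_n},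
      ((#|S| == s) && [forall x in S, forall y in S, (x != y) ==> c (x, y)])
      || ((#|S| == t) && [forall x in S, forall y in S, (x != y) ==> ~~ c (x, y)])]].

(* R(s,t): the least n with the Ramsey property (0 if none, which never happens) *)
Definition ramsey (s t : nat) : nat :=
  match pselect (exists n, ramsey_prop s t n) with
  | left h => ex_minn h
  | right _ => 0
  end.

Definition log2 (R : realType) (x : R) : R := ln x / ln 2.

Definition gfun (R : realType) (n : nat) : R :=
  (log2 (n%:R : R)) ^+ 2 / n%:R * fchi R n.

Definition Lconst (R : realType) : \bar R :=
  limn_einf (fun k : nat => (log2 ((ramsey k k)%:R : R) / k%:R)%:E).

Definition Mconst (R : realType) : \bar R :=
  limn_esup (fun t : nat =>
    (\big[Num.max/0]_(1 <= s < t.+1)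
       (log2 ((ramsey s t)%:R : R) / Num.sqrt ((s * t)%:R)))%:E).

From HB Require Import structures.
From mathcomp Require Import all_boot all_order all_algebra.
From mathcomp Require Import boolp classical_sets reals ereal topology normedtype sequences exp.
From mathcomp Require Import lra.
Import Order.TTheory GRing.Theory Num.Theory.

Set Implicit Arguments.
Unset Strict Implicit.
Unset Printing Implicit Defensive.

(* A red/blue colouring of K_n with no red K_s and no blue K_t is a graph G with
   omega(G) < s and alpha(G) < t; since every colour class of a proper colouring is
   independent, chi(G) >= n / (t - 1), hence f(n) >= n / ((s - 1)(t - 1)).
   For the liminf, take the least k with R(k+1,k+1) > n: then f(n) >= n / k^2 while
   log n >= log R(k,k) >~ L k.  For the limsup, take n = R(s,t) - 1 along the pairs
   realising M: then f(n) >= n / (s t) while log n >~ M sqrt(s t). *)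

Lemma exists_subset_card (T : finType) (A : {set T}) k :
  k <= #|A| -> exists2 B : {set T}, B \subset A & #|B| = k.
Proof.
case/card_geqP => s [uniq_s <- sA]; exists [set x in s].
  by apply/fintype.subsetP => x; rewrite inE => /sA.
by rewrite cardsE; apply/card_uniqP.
Qed.

Lemma lt_bigmax_nat d (T : orderType d) (x0 x : T) m n (F : nat -> T) :
  (x0 <= x)%O -> (x < \big[Order.max/x0]_(m <= i < n) F i)%O ->
  exists2 i, (m <= i < n)%N & (x < F i)%O.
Proof.
move=> x0_le x_lt; have /hasP[i i_in x_lt_Fi] : has (fun i => x < F i)%O (index_iota m n).
  apply: contraTT x_lt => /hasPn no_i; rewrite -leNgt big_seq.
  by apply: bigmax_le => // i /no_i; rewrite -leNgt.
by exists i; rewrite // -mem_index_iota.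
Qed.

Section Graph.
Variables (n : nat) (E : {ffun 'I_n * 'I_n -> bool}).

Definition is_independent (S : {set 'I_n}) : bool :=
  [forall x in S, forall y in S, ~~ E (x, y)].

Lemma is_cliqueS (S U : {set 'I_n}) : U \subset S -> is_clique E S -> is_clique E U.
Proof.
move=> /fintype.subsetP US /forall_inP clS; apply/forall_inP => x /US/clS/forall_inP clSx.
by apply/forall_inP => y /US; apply: clSx.
Qed.

Lemma is_independentS (S U : {set 'I_n}) : U \subset S -> is_independent S -> is_independent U.
Proof.
move=> /fintype.subsetP US /forall_inP indS; apply/forall_inP => x /US/indS/forall_inP indSx.
by apply/forall_inP => y /US; apply: indSx.
Qed.

Lemma is_clique_set1 x : is_clique E [set x].
Proof. by apply/forall_inP => y /set1P->; apply/forall_inP => z /set1P->; rewrite eqxx. Qed.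

Lemma clique_number_gt0 : 0 < n -> 0 < clique_number E.
Proof.
move=> n_gt0; rewrite -(cards1 (Ordinal n_gt0)).
exact: leq_bigmax_cond (is_clique_set1 _).
Qed.

Hypothesis simpleE : simple_graph E.

Lemma is_independent_set1 x : is_independent [set x].
Proof.
case/andP: simpleE => /forallP irrE _.
by apply/forall_inP => y /set1P->; apply/forall_inP => z /set1P->; apply: irrE.
Qed.

Lemma colorable_chromatic : colorable E (chromatic E).
Proof.
case/andP: simpleE => /forallP irrE _.
apply: (big_ind (colorable E)) => [|k l colk coll|//].
  apply/existsP; exists [ffun x => x]; apply/forallP => x; apply/forallP => y.
  by apply/implyP; rewrite !ffunE; apply: contraTneq => ->; apply: irrE.
by rewrite /minn; case: ifP.
Qed.

Lemma leq_card_chromatic b :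
  (forall S, is_independent S -> #|S| <= b) -> n <= chromatic E * b.
Proof.
move=> indep_b; have /existsP[c /forallP c_proper] := colorable_chromatic.
have card_classes : \sum_(i < chromatic E) #|[set x | c x == i]| = n.
  rewrite -[RHS]card_ord -sum1_card (partition_big c xpredT) //=.
  by apply: eq_bigr => i _; rewrite -sum1_card; apply: eq_bigl => x; rewrite inE.
rewrite -[leqLHS]card_classes -[X in X * b]card_ord -sum_nat_const.
apply: leq_sum => i _; apply: indep_b.
apply/forall_inP => x; rewrite inE => /eqP cx; apply/forall_inP => y; rewrite inE => /eqP cy.
by apply/negP => /(implyP (forallP (c_proper x) y)); rewrite cx cy eqxx.
Qed.

Lemma fchi_ge_graph (R : realType) a b : 0 < n ->
  (forall S, is_clique E S -> #|S| <= a) -> (forall S, is_independent S -> #|S| <= b) ->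
  (n%:R / (a * b)%:R <= fchi R n)%R.
Proof.
move=> n_gt0 clique_a indep_b.
have omega_a : clique_number E <= a by apply/bigmax_leqP => S; apply: clique_a.
have omega_gt0 := clique_number_gt0 n_gt0.
have n_chi := leq_card_chromatic indep_b.
have b_gt0 : 0 < b by case: b {indep_b} n_chi => [|//]; rewrite muln0 leqNgt n_gt0.
apply: le_trans (le_bigmax_cond _ _ simpleE) => /=.
have ab_gt0 : 0 < a * b by rewrite muln_gt0 b_gt0 (leq_trans omega_gt0).
rewrite ler_pdivrMr ?ltr0n // mulrAC ler_pdivlMr ?ltr0n // -!natrM ler_nat.
by rewrite mulnCA mulnC; apply: leq_mul.
Qed.

End Graph.

Lemma ramsey_prop1s t n : 0 < n -> ramsey_prop 1 t n.
Proof.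
move=> n_gt0; apply/forallP => c; apply/implyP => _; apply/existsP.
exists [set Ordinal n_gt0]; rewrite cards1 eqxx /=.
by apply/orP; left; apply/forall_inP => x /set1P->; apply/forall_inP => y /set1P->; rewrite eqxx.
Qed.

Lemma not_ramsey_prop_lt s t n : 1 < s -> n < t -> ~~ ramsey_prop s t n.
Proof.
move=> s_gt1 n_lt_t; apply/forallPn; exists [ffun _ => false]; rewrite negb_imply.
apply/andP; split; first by apply/forallP => x; apply/forallP => y; rewrite !ffunE.
apply/existsPn => S; rewrite negb_or; apply/andP; split.
  apply/negP => /andP[/eqP cardS /forall_inP redS].
  have /card_gt1P[x [y [xS yS xy]]] : 1 < #|S| by rewrite cardS.
  by have /forall_inP/(_ y yS) := redS x xS; rewrite xy ffunE.
apply/negP => /andP[/eqP cardS _].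
by have := max_card S; rewrite card_ord cardS leqNgt n_lt_t.
Qed.

Lemma not_ramsey_prop_graph s t n : ~~ ramsey_prop s t n ->
  exists E : {ffun 'I_n * 'I_n -> bool}, [/\ simple_graph E,
    forall S, is_clique E S -> #|S| < s & forall S, is_independent E S -> #|S| < t].
Proof.
case/forallPn => c; rewrite negb_imply => /andP[/forallP c_sym /existsPn no_mono].
pose E := [ffun p : 'I_n * 'I_n => (p.1 != p.2) && c p].
have cliqueE U : is_clique E U = [forall x in U, forall y in U, (x != y) ==> c (x, y)].
  by apply: eq_forallb_in => x _; apply: eq_forallb_in => y _; rewrite ffunE /=; case: (x != y).
have indepE U : is_independent E U = [forall x in U, forall y in U, (x != y) ==> ~~ c (x, y)].
  by apply: eq_forallb_in => x _; apply: eq_forallb_in => y _; rewrite ffunE /=; case: (x != y).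
exists E; split.
- apply/andP; split; apply/forallP => x; first by rewrite ffunE /= eqxx.
  by apply/forallP => y; rewrite !ffunE /= [y == x]eq_sym (eqP (forallP (c_sym x) y)).
- move=> S clS; rewrite ltnNge; apply/negP => /exists_subset_card[U US cardU].
  by apply/negP: (no_mono U); rewrite cardU eqxx -cliqueE (is_cliqueS US clS).
- move=> S indS; rewrite ltnNge; apply/negP => /exists_subset_card[U US cardU].
  by apply/negP: (no_mono U); rewrite cardU eqxx -indepE (is_independentS US indS) orbT.
Qed.

Lemma ramsey_le s t n : ramsey_prop s t n -> ramsey s t <= n.
Proof.
move=> st_n; rewrite /ramsey; case: pselect => [ex|[]]; last by exists n.
by case: ex_minnP => m _; apply.
Qed.

Lemma not_ramsey_prop_lt_ramsey s t n : n < ramsey s t -> ~~ ramsey_prop s t n.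
Proof. by move=> n_lt; apply/negP => /ramsey_le; rewrite leqNgt n_lt. Qed.

Lemma ramsey_prop_ramsey s t : 0 < ramsey s t -> ramsey_prop s t (ramsey s t).
Proof. by rewrite /ramsey; case: pselect => [ex|//]; case: ex_minnP. Qed.

Lemma leq_ramsey s t : 0 < s -> 1 < ramsey s t -> t <= ramsey s t.
Proof.
move=> s_gt0 R_gt1; have st_R := ramsey_prop_ramsey (ltnW R_gt1).
case: s s_gt0 st_R R_gt1 => [|[|s]] // _ st_R R_gt1.
- by have := ramsey_le (ramsey_prop1s t (isT : 0 < 1)); rewrite leqNgt R_gt1.
- by rewrite leqNgt; apply: contraL st_R; apply: not_ramsey_prop_lt.
Qed.

Section Log2.
Variable R : realType.
Local Open Scope ring_scope.

Lemma ln2_gt0 : 0 < ln (2 : R).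
Proof. by rewrite ln_gt0 // ltr1n. Qed.

Lemma log2_nat_ge0 m : 0 <= log2 (m%:R : R).
Proof.
rewrite /log2 divr_ge0 ?(ltW ln2_gt0) //.
by case: m => [|m]; [rewrite ln0 | apply: ln_ge0; rewrite ler1n].
Qed.

Lemma log2_nat_le1 m : (m <= 1)%N -> log2 (m%:R : R) = 0.
Proof. by case: m => [|[|]] // _; rewrite /log2 ?(ln0 (lexx _)) ?ln1 mul0r. Qed.

Lemma ler_log2_nat m n : (m <= n)%N -> log2 (m%:R : R) <= log2 n%:R.
Proof.
case: m => [_|m mn]; first by rewrite log2_nat_le1 ?log2_nat_ge0.
rewrite /log2 ler_pM2r ?invr_gt0 ?ln2_gt0 //.
by rewrite ler_ln ?posrE ?ltr0n ?ler_nat // (leq_trans _ mn).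
Qed.

Lemma log2_exp2 m : log2 ((2 ^ m)%:R : R) = m%:R.
Proof.
by rewrite /log2 natrX lnXn // -[ln 2 *+ m]mulr_natl mulfK // gt_eqF ?ln2_gt0.
Qed.

Lemma log2_natS_le n : (0 < n)%N -> log2 (n.+1%:R : R) <= log2 n%:R + 1.
Proof.
move=> n_gt0; apply: le_trans (ler_log2_nat (_ : n.+1 <= n * 2)%N) _.
  by rewrite muln2 -addnn -addn1 leq_add2l.
by rewrite /log2 natrM lnM ?posrE ?ltr0n // mulrDl divff // gt_eqF ?ln2_gt0.
Qed.

End Log2.

Section Gfun.
Variable R : realType.
Local Open Scope ring_scope.

Lemma gfun_ge0 n : 0 <= gfun R n.
Proof. by rewrite /gfun mulr_ge0 ?divr_ge0 ?sqr_ge0 //; apply: bigmax_ge_id. Qed.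

Lemma gfun_ge_not_ramsey n s t (x : R) : (0 < n)%N -> ~~ ramsey_prop s.+1 t.+1 n ->
  x ^+ 2 * (s * t)%:R <= log2 (n%:R : R) ^+ 2 -> x ^+ 2 <= gfun R n.
Proof.
move=> n_gt0 /not_ramsey_prop_graph[E [simpleE clique_s indep_t]] x_le.
pose v := Ordinal n_gt0.
have s_gt0 : (0 < s)%N by have := clique_s _ (is_clique_set1 E v); rewrite cards1.
have t_gt0 : (0 < t)%N by have := indep_t _ (is_independent_set1 simpleE v); rewrite cards1.
have f_ge := fchi_ge_graph simpleE R n_gt0 clique_s indep_t.
rewrite /gfun; apply: le_trans (ler_wpM2l _ f_ge); last by rewrite divr_ge0 ?sqr_ge0.
by rewrite mulrA divfK ?pnatr_eq0 -?lt0n // ler_pdivlMr // ltr0n muln_gt0 s_gt0.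
Qed.

Lemma gfun_ge_ramsey_diag (a : R) N : 0 < a ->
  (forall k, (N <= k)%N -> a < log2 (ramsey k k)%:R / k%:R) ->
  exists N', forall n, (N' <= n)%N -> a ^+ 2 <= gfun R n.
Proof.
move=> a_gt0 a_lt.
have [m aN_lt_m] : exists m : nat, a * N%:R < m%:R.
  by exists (Num.truncn (a * N%:R)).+1; apply: truncnS_gt.
(* Below N the hypothesis says nothing; n >= 2 ^ m covers those k since a * k < m. *)
exists (2 ^ m)%N => n n_ge.
have n_gt0 : (0 < n)%N by apply: leq_trans n_ge; rewrite expn_gt0.
have ex_k : exists k, ~~ ramsey_prop k.+1 k.+1 n by exists n; apply: not_ramsey_prop_lt.
case: (ex_minnP ex_k) => k not_k k_min.
apply: (gfun_ge_not_ramsey n_gt0 not_k).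
suff ak_le : a * k%:R <= log2 (n%:R : R).
  by rewrite natrM -expr2 -exprMn ler_sqr // nnegrE ?log2_nat_ge0 // mulr_ge0 ?(ltW a_gt0).
case: k {not_k} k_min => [_|k k_min]; first by rewrite mulr0 log2_nat_ge0.
have k_ramsey : ramsey_prop k.+1 k.+1 n by apply/negPn/negP => /k_min; rewrite ltnn.
have [N_le|k_lt_N] := leqP N k.+1.
  have := a_lt _ N_le; rewrite ltr_pdivlMr ?ltr0n // => /ltW/le_trans; apply.
  exact: ler_log2_nat (ramsey_le k_ramsey).
apply: le_trans (ler_log2_nat _ n_ge); rewrite log2_exp2.
by apply: le_trans (ltW aN_lt_m); rewrite ler_pM2l // ler_nat ltnW.
Qed.

(* The slack c - b pays for the loss log2 R(s,t) <= log2 (R(s,t) - 1) + 1. *)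
Lemma gfun_ge_ramsey (b c : R) s t : 0 <= b -> (0 < s <= t)%N ->
  1 <= (c - b) * Num.sqrt (s * t)%:R -> c * Num.sqrt (s * t)%:R < log2 (ramsey s t)%:R ->
  exists2 n, (t <= n.+1)%N & b ^+ 2 <= gfun R n.
Proof.
move=> b_ge0 /andP[s_gt0 s_le_t] gap c_lt.
set q := Num.sqrt _ in gap c_lt.
have bq_ge0 : 0 <= b * q by rewrite mulr_ge0 ?sqrtr_ge0.
have R_gt1 : (1 < ramsey s t)%N.
  by rewrite ltnNge; apply/negP => /(log2_nat_le1 R) R_le1; rewrite R_le1 mulrBl in c_lt gap; lra.
set n := (ramsey s t).-1.
have R_eq : ramsey s t = n.+1 by rewrite prednK // ltnW.
have n_gt0 : (0 < n)%N by rewrite -ltnS -R_eq.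
exists n; first by rewrite -R_eq leq_ramsey.
have bq_lt : b * q < log2 n%:R.
  have := log2_natS_le R n_gt0; rewrite -R_eq => ?; rewrite mulrBl in gap; lra.
have not_n : ~~ ramsey_prop s t n by apply: not_ramsey_prop_lt_ramsey; rewrite R_eq.
have [s' s_eq] : exists s', s = s'.+1 by exists s.-1; rewrite prednK.
have [t' t_eq] : exists t', t = t'.+1 by exists t.-1; rewrite prednK // (leq_trans s_gt0).
rewrite s_eq t_eq in not_n.
apply: gfun_ge_not_ramsey n_gt0 not_n _.
apply: le_trans (_ : (b * q) ^+ 2 <= _).
  by rewrite exprMn ler_wpM2l ?sqr_ge0 // sqr_sqrtr // ler_nat s_eq t_eq leq_mul.
by rewrite ler_sqr ?nnegrE ?log2_nat_ge0 // (ltW bq_lt).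
Qed.

Lemma gfun_ge_ramsey_often (b c : R) : 0 < b -> b < c ->
  (forall N, exists2 t, (N <= t)%N &
     c < \big[Num.max/0]_(1 <= s < t.+1) (log2 (ramsey s t)%:R / Num.sqrt (s * t)%:R)) ->
  forall N, exists2 n, (N <= n)%N & b ^+ 2 <= gfun R n.
Proof.
move=> b_gt0 b_lt_c often N.
have [T T_gt] : exists T : nat, ((c - b) ^+ 2)^-1 < T%:R.
  by exists (Num.truncn ((c - b) ^+ 2)^-1).+1; apply: truncnS_gt.
case: (often (maxn N.+1 T)) => t t_ge.
case/lt_bigmax_nat => [|s s_range c_lt]; first by lra.
have /andP[s_gt0 s_le_t] := s_range.
have st_ge_T : (T <= s * t)%N.
  by rewrite (leq_trans (leq_maxr N.+1 T)) // (leq_trans t_ge) // leq_pmull.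
have q_gt0 : 0 < Num.sqrt (s * t)%:R :> R.
  by rewrite sqrtr_gt0 ltr0n muln_gt0 s_gt0 (leq_trans s_gt0).
rewrite ltr_pdivlMr // in c_lt.
have gap : 1 <= (c - b) * Num.sqrt (s * t)%:R.
  have cb_gt0 : 0 < c - b by rewrite subr_gt0.
  rewrite -(@ler_sqr _ 1) ?nnegrE ?mulr_ge0 ?sqrtr_ge0 ?(ltW cb_gt0) //.
  rewrite expr1n exprMn sqr_sqrtr // -ler_pdivrMl ?exprn_gt0 // mulr1.
  by rewrite (le_trans (ltW T_gt)) // ler_nat.
have [n t_le b_le] := gfun_ge_ramsey (ltW b_gt0) s_range gap c_lt.
by exists n => //; rewrite -ltnS (leq_trans (leq_maxl N.+1 T)) // (leq_trans t_ge).
Qed.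

End Gfun.

Section LimnEinfEsup.
Variable R : realType.
Local Open Scope ereal_scope.
Implicit Types (u : R^nat) (x : R).

Lemma limn_einfE (u : (\bar R)^nat) : limn_einf u = ereal_sup (range (einfs u)).
Proof. by rewrite limn_einf_lim; apply/cvg_lim => //; apply: cvg_einfs_sup. Qed.

Lemma limn_esupE (u : (\bar R)^nat) : limn_esup u = ereal_inf (range (esups u)).
Proof. by rewrite limn_esup_lim; apply/cvg_lim => //; apply: cvg_esups_inf. Qed.

Lemma limn_einf_ge u x N :
  (forall k, (N <= k)%N -> (x <= u k)%R) -> x%:E <= limn_einf (EFin \o u).
Proof.
move=> x_le; rewrite limn_einfE; apply: le_ereal_sup_tmp.
exists (einfs (EFin \o u) N); first by exists N.
by apply: le_ereal_inf_tmp => _ [k /= Nk <-]; rewrite lee_fin x_le.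
Qed.

Lemma gt_limn_einf u x :
  x%:E < limn_einf (EFin \o u) -> exists N, forall k, (N <= k)%N -> (x < u k)%R.
Proof.
rewrite limn_einfE => /ereal_sup_gt[_ [N _ <-] x_lt]; exists N => k Nk.
by rewrite -lte_fin (lt_le_trans x_lt) //; apply: ereal_inf_lbound; exists k.
Qed.

Lemma limn_esup_ge u x :
  (forall N, exists2 k, (N <= k)%N & (x <= u k)%R) -> x%:E <= limn_esup (EFin \o u).
Proof.
move=> x_le; rewrite limn_esupE; apply: le_ereal_inf_tmp => _ [N _ <-].
have [k Nk x_le_uk] := x_le N; apply: le_ereal_sup_tmp.
by exists (u k)%:E; [exists k | rewrite lee_fin].
Qed.

Lemma gt_limn_esup u x :
  x%:E < limn_esup (EFin \o u) -> forall N, exists2 k, (N <= k)%N & (x < u k)%R.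
Proof.
rewrite limn_esupE => x_lt N.
have /ereal_sup_gt[_ [k /= Nk <-]] : x%:E < esups (EFin \o u) N.
  by apply: lt_le_trans x_lt _; apply: ereal_inf_lbound; exists N.
by rewrite lte_fin; exists k.
Qed.

Lemma lte_dense_fin x (y : \bar R) : x%:E < y -> exists2 z : R, (x < z)%R & z%:E < y.
Proof.
case: y => [r||] //; last by exists (x + 1)%R; rewrite ?ltry //; lra.
by rewrite lte_fin => x_lt_r; exists ((x + r) / 2)%R; rewrite ?lte_fin; lra.
Qed.

Lemma lee_mul_self_approx (L G : \bar R) : 0 <= L -> 0 <= G ->
  (forall a : R, (0 < a)%R -> a%:E < L -> (a ^+ 2)%:E <= G) -> L * L <= G.
Proof.
(* If G < L * L then sqrt G < L, and any a strictly in between has a ^ 2 > G. *)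
move=> L_ge0 G_ge0 sqr_le; rewrite leNgt; apply/negP => G_lt.
have /fineK G_eq : G \is a fin_num by rewrite ge0_fin_numE // (lt_le_trans G_lt) ?leey.
have G_sqr := sqr_sqrtr (fine_ge0 G_ge0); set y := Num.sqrt (fine G) in G_sqr.
have y_ge0 : (0 <= y)%R := sqrtr_ge0 _.
have y_lt : y%:E < L.
  rewrite ltNge; apply/negP => L_le; move: G_lt; apply/negP; rewrite -leNgt -G_eq.
  by rewrite -G_sqr expr2 EFinM lee_pmul.
have [a y_lt_a a_lt] := lte_dense_fin y_lt.
have a_gt0 := le_lt_trans y_ge0 y_lt_a.
have := sqr_le a a_gt0 a_lt; rewrite -G_eq lee_fin -G_sqr.
by rewrite ler_sqr ?nnegrE ?(ltW a_gt0) // leNgt y_lt_a.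
Qed.

End LimnEinfEsup.

Local Open Scope ereal_scope.

Theorem theorem2p1 (R : realType) :
  Lconst R * Lconst R <= limn_einf (fun n : nat => (gfun R n)%:E) /\
  Mconst R * Mconst R <= limn_esup (fun n : nat => (gfun R n)%:E).
Proof.
have g_ge0 : 0 <= limn_einf (fun n : nat => (gfun R n)%:E).
  by apply: (@limn_einf_ge _ _ _ 0) => n _; apply: gfun_ge0.
split; apply: lee_mul_self_approx.
- by apply: (@limn_einf_ge _ _ _ 0) => k _; rewrite divr_ge0 ?log2_nat_ge0.
- exact: g_ge0.
- move=> a a_gt0 /gt_limn_einf[N a_lt].
  have [N' a2_le] := gfun_ge_ramsey_diag a_gt0 a_lt.
  exact: limn_einf_ge a2_le.
- by apply: limn_esup_ge => N; exists N => //; apply: bigmax_ge_id.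
- exact: le_trans g_ge0 (limn_einf_sup _).
- move=> a a_gt0 /lte_dense_fin[c a_lt_c /gt_limn_esup c_lt].
  exact/limn_esup_ge/(gfun_ge_ramsey_often a_gt0 a_lt_c c_lt).
Qed.
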